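(* Let $X'\in\lambda\mathrm{Der}(\mathcal{B})[[\lambda]]$ be such that $\exp(X')\phi_0'(\mathcal{A}'[[\lambda]])\subseteq C$. Then (i) the map $\exp(X')\phi_0':\mathcal{A}'[[\lambda]]\to C$ is a ring isomorphism; (ii) there is a unique Poisson structure $\pi'$ on $\mathcal{A}'[[\lambda]]$ such that $\Phi'=\exp(X')\phi_0':(\mathcal{A}'[[\lambda]],\pi')\to(\mathcal{B}[[\lambda]],\sigma)$ is a Poisson morphism.
   Context: $\mathbb{K}$ is a field of characteristic zero. $\mathcal{A},\mathcal{B}$ are commutative $\mathbb{K}$-algebras with Poisson brackets $\pi_0=\{\cdot,\cdot\}_{\mathcal{A}}$, $\sigma_0=\{\cdot,\cdot\}_{\mathcal{B}}$, and $\phi_0:\mathcal{A}\to\mathcal{B}$ is a Poisson morphism. $\pi$ and $\sigma$ are formal Poisson deformations of $\pi_0,\sigma_0$ (i.e. $\mathbb{K}[[\lambda]]$-bilinear Poisson brackets on $\mathcal{A}[[\lambda]]$, $\mathcal{B}[[\lambda]]$ with zeroth-order terms $\pi_0,\sigma_0$), and $\Phi:(\mathcal{A}[[\lambda]],\pi)\to(\mathcal{B}[[\lambda]],\sigma)$ is a $\mathbb{K}[[\lambda]]$-linear Poisson morphism (of commutative algebras and brackets) with zeroth-order term $\phi_0$. $\mathcal{A}'=\{b\in\mathcal{B}:\{b,\phi_0(a)\}_{\mathcal{B}}=0\ \forall a\in\mathcal{A}\}$ is the Poisson commutant, with its induced bracket $\pi_0'$, and $\phi_0':\mathcal{A}'\to\mathcal{B}$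 is the inclusion (extended $\lambda$-linearly). $C=\{b\in\mathcal{B}[[\lambda]]:\sigma(b,\Phi(a))=0\ \forall a\in\mathcal{A}[[\lambda]]\}$. For $X'\in\lambda\mathrm{Der}(\mathcal{B})[[\lambda]]$, $\exp(X')=\sum_n(X')^n/n!$. *)

(* Formal power series V[[lambda]] are coefficient sequences nat -> V. *)
From HB Require Import structures.
From mathcomp Require Import all_boot all_order all_algebra.
Set Implicit Arguments. Unset Strict Implicit. Unset Printing Implicit Defensive.
Import Order.TTheory GRing.Theory Num.Theory.
Local Open Scope ring_scope.

Definition series (V : Type) := nat -> V.

Section Series.
Variable K : fieldType.
Variable B : comAlgType K.

Definition sconst (a : B) : series B := fun n => if n is 0 then a else 0.
Definition szero : series B := fun _ => 0.
Definition sone : series B := sconst 1.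
Definition sadd (f g : series B) : series B := fun n => f n + g n.
Definition sopp (f : series B) : series B := fun n => - f n.
Definition smul (f g : series B) : series B :=
  fun n => \sum_(i < n.+1) f i * g (n - i)%N.
Definition sscal (c : series K) (f : series B) : series B :=
  fun n => \sum_(i < n.+1) c i *: f (n - i)%N.

(* K[[lambda]]-bilinear Poisson bracket on the subset P of B[[lambda]]
   (P is a K[[lambda]]-subalgebra; br is only required to be defined on P) *)
Definition spoisson (P : series B -> Prop)
    (br : series B -> series B -> series B) : Prop :=
  [/\ (forall f g, P f -> P g -> P (br f g)),
      (forall c f g h, P f -> P g -> P h ->
          br (sadd (sscal c f) g) h = sadd (sscal c (br f h)) (br g h)),
      (forall f g, P f -> P g -> br f g = sopp (br g f)),
      (forall f g h, P f -> P g -> P h ->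
          sadd (sadd (br f (br g h)) (br g (br h f))) (br h (br f g)) = szero)
    & (forall f g h, P f -> P g -> P h ->
          br f (smul g h) = sadd (smul (br f g) h) (smul g (br f h)))].

(* a derivation series X' = sum_k lambda^k X_k acting on B[[lambda]] *)
Definition sder (X : nat -> B -> B) (f : series B) : series B :=
  fun n => \sum_(k < n.+1) X k (f (n - k)%N).

(* exp(X') = sum_n X'^n / n!; since X_0 = 0, X'^n f has order >= n,
   so the m-th coefficient only involves n <= m *)
Definition sexp (X : nat -> B -> B) (f : series B) : series B :=
  fun m => \sum_(n < m.+1) (n`!%:R)^-1 *: (iter n (sder X) f m).

End Series.

Definition poisson (K : fieldType) (A : comAlgType K) (br : A -> A -> A) : Prop :=
  [/\ (forall (c : K) x y z, br (c *: x + y) z = c *: br x z + br y z),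
      (forall x y, br x y = - br y x),
      (forall x y z, br x (br y z) + br y (br z x) + br z (br x y) = 0)
    & (forall x y z, br x (y * z) = br x y * z + y * br x z)].

Definition is_derivation (K : fieldType) (B : comAlgType K) (D : B -> B) : Prop :=
  (forall (c : K) x y, D (c *: x + y) = c *: D x + D y) /\
  (forall x y, D (x * y) = D x * y + x * D y).

Definition commutant (K : fieldType) (A B : comAlgType K)
    (sigma0 : B -> B -> B) (phi0 : A -> B) (b : B) : Prop :=
  forall a : A, sigma0 b (phi0 a) = 0.

(* A'[[lambda]], seen inside B[[lambda]] via phi0' (the inclusion) *)
Definition commutant_series (K : fieldType) (A B : comAlgType K)
    (sigma0 : B -> B -> B) (phi0 : A -> B) (f : series B) : Prop :=
  forall n, commutant sigma0 phi0 (f n).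

Definition deformed_commutant (K : fieldType) (A B : comAlgType K)
    (sigma : series B -> series B -> series B) (Phi : series A -> series B)
    (h : series B) : Prop :=
  forall g : series A, sigma h (Phi g) = szero B.

From HB Require Import structures.
From mathcomp Require Import all_boot all_order all_algebra.
From mathcomp Require Import zify ring.
From Stdlib Require Import FunctionalExtensionality.
Set Implicit Arguments. Unset Strict Implicit. Unset Printing Implicit Defensive.
Import GRing.Theory.
Local Open Scope ring_scope.

(* Because X_0 = 0, exp(X') is the identity plus terms raising the lambda-adic
   order: it is a K[[lambda]]-linear unitriangular map of B[[lambda]], hence a
   bijection whose inverse is built one coefficient at a time. In characteristic
   zero it is multiplicative: below any order N, X' acts as a derivation D of the
   polynomial ring B[lambda], and the Leibniz rule
   D^n (p q) = sum_i C(n, i) D^i p D^(n-i) q turns exp(D)(p q) into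
   exp(D) p * exp(D) q. The preimage f of an element of C lies in A'[[lambda]]:
   if f_j is in A' for j < n, removing the image of the truncation of f leaves an
   element of C of order n with leading coefficient f_n, and the order-n
   coefficient of its sigma-bracket with Phi(a) is sigma_0(f_n, phi_0(a)).
   Finally pi' is sigma transported along the bijection, which injectivity
   makes unique. *)

Definition kconst (K : fieldType) (c : K) : series K :=
  fun i => if i is 0%N then c else 0.

Definition vanishes_below (V : nmodType) (v : nat) (f : series V) : Prop :=
  forall j, (j < v)%N -> f j = 0.

Section SeriesArith.
Variables (K : fieldType) (B : comAlgType K).
Implicit Types (f g : series B) (c : series K).

Lemma sscal_kconst (a : K) f : sscal (kconst a) f = fun j => a *: f j.
Proof.
apply: functional_extensionality => j.
by rewrite /sscal big_ord_recl subn0 big1 ?addr0 // => i _; rewrite scale0r.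
Qed.

Lemma sscal1 f : sscal (kconst 1) f = f.
Proof.
by rewrite sscal_kconst; apply: functional_extensionality => j; rewrite scale1r.
Qed.

Lemma sscalN1 f : sscal (kconst (-1)) f = sopp f.
Proof.
by rewrite sscal_kconst; apply: functional_extensionality => j; rewrite scaleN1r.
Qed.

Lemma sscal0r c : sscal c (szero B) = szero B.
Proof.
apply: functional_extensionality => j.
by rewrite /sscal big1 // => i _; rewrite scaler0.
Qed.

Lemma sadd0l f : sadd (szero B) f = f.
Proof. by apply: functional_extensionality => j; rewrite /sadd add0r. Qed.

Lemma sadd0r f : sadd f (szero B) = f.
Proof. by apply: functional_extensionality => j; rewrite /sadd addr0. Qed.

Lemma saddNl f : sadd (sopp f) f = szero B.
Proof. by apply: functional_extensionality => j; rewrite /sadd /sopp addNr. Qed.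

Lemma sconst0 : sconst (0 : B) = szero B.
Proof. by apply: functional_extensionality => -[]. Qed.

Lemma sopp0 : sopp (szero B) = szero B.
Proof. by apply: functional_extensionality => j; rewrite /sopp oppr0. Qed.

End SeriesArith.

Section Derivation.
Variables (K : fieldType) (B : comAlgType K) (D : B -> B).
Hypothesis hD : is_derivation D.

Lemma derivationD x y : D (x + y) = D x + D y.
Proof. by have [lin _] := hD; rewrite -[x]scale1r lin !scale1r. Qed.

Lemma derivation0 : D 0 = 0.
Proof. by apply: (addIr (D 0)); rewrite add0r -derivationD addr0. Qed.

Lemma derivationZ (a : K) x : D (a *: x) = a *: D x.
Proof. by have [lin _] := hD; rewrite -[a *: x]addr0 lin derivation0 addr0. Qed.

Lemma derivationM x y : D (x * y) = D x * y + x * D y.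
Proof. by have [_ leib] := hD; apply: leib. Qed.

Lemma derivation_sum (I : Type) (r : seq I) (P : pred I) (F : I -> B) :
  D (\sum_(i <- r | P i) F i) = \sum_(i <- r | P i) D (F i).
Proof. exact: (big_morph D derivationD derivation0). Qed.

Lemma derivation1 : D 1 = 0.
Proof.
have D11 := derivationM 1 1; rewrite !mulr1 mul1r in D11.
by apply: (addrI (D 1)); rewrite -D11 addr0.
Qed.

Lemma derivation_alg (a : K) : D a%:A = 0.
Proof. by rewrite derivationZ derivation1 scaler0. Qed.

End Derivation.

Section IteratedLeibniz.
Variables (R : pzRingType) (D : R -> R).
Hypotheses (D_add : forall p q, D (p + q) = D p + D q)
  (D_mul : forall p q, D (p * q) = D p * q + p * D q).

Lemma iter_derivation_add n p q : iter n D (p + q) = iter n D p + iter n D q.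
Proof. by elim: n => //= n ->; rewrite D_add. Qed.

Lemma iter_derivation_mul n p q : iter n D (p * q) =
  \sum_(i < n.+1) (iter i D p * iter (n - i) D q) *+ 'C(n, i).
Proof.
have D0 : D 0 = 0 by apply: (addIr (D 0)); rewrite -D_add !add0r.
have D_sum := big_morph D D_add D0.
have D_natmul c r : D (r *+ c) = D r *+ c.
  by elim: c => [|c IH]; rewrite ?D0 // !mulrS D_add IH.
elim: n => [|n IHn]; first by rewrite big_ord1 /= mulr1n.
rewrite iterS IHn D_sum.
under eq_bigr do rewrite D_natmul D_mul mulrnDl.
rewrite big_split /= [RHS]big_ord_recl /= bin0.
rewrite [X in _ = _ + X](eq_bigr (fun i : 'I_n.+1 =>
   (iter i.+1 D p * iter (n - i) D q) *+ 'C(n, i) +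
   (iter i.+1 D p * iter (n - i) D q) *+ 'C(n, i.+1))); last first.
  by move=> i _; rewrite /bump /= add0n add1n subSS binS mulrnDr addrC.
rewrite big_split /= addrCA; congr (_ + _).
rewrite big_ord_recl /= bin0 [X in _ = _ + X]big_ord_recr /= bin_small //.
rewrite mulr0n addr0.
rewrite subn0; congr (_ + _); apply: eq_bigr => i _.
by rewrite /bump /= add0n add1n; congr (_ * _ *+ _); rewrite -iterS subnSK.
Qed.

End IteratedLeibniz.

Lemma sum_triangle_square (V : zmodType) N (G : nat -> nat -> V) :
  (forall k l, (N <= k + l)%N -> G k l = 0) ->
  \sum_(n < N) \sum_(i < n.+1) G i (n - i)%N = \sum_(k < N) \sum_(l < N) G k l.
Proof.
move=> G0.
transitivity (\sum_(n < N) \sum_(k < N | (k <= n)%N) G k (n - k)%N).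
  apply: eq_bigr => n _.
  by rewrite (big_ord_widen N (fun i => G i (n - i)%N)) ?ltn_ord.
under eq_bigr do rewrite big_mkcond.
rewrite exchange_big /=; apply: eq_bigr => k _; rewrite -big_mkcond /=.
rewrite -(big_mkord (fun n => (k <= n)%N) (fun n => G k (n - k)%N)).
rewrite (@big_cat_nat _ _ _ k 0 N) ?(ltnW (ltn_ord k)) //=.
rewrite big_nat_cond big1 ?add0r; last first.
  by move=> i /andP[/andP[_ lt_ik] le_ki]; rewrite leqNgt lt_ik in le_ki.
rewrite -{1}[k : nat]add0n big_addn.
under eq_bigr do rewrite addnK.
rewrite (eq_bigl xpredT); last by move=> i; rewrite leq_addl.
rewrite big_mkord (big_ord_widen N (G k)) ?leq_subr // big_mkcond /=.
apply: eq_bigr => l _; case: ltnP => // le_l.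
by rewrite G0 //; move: le_l (ltn_ord k); lia.
Qed.

Lemma invfact_bin (K : fieldType) (hK : [pchar K] =i pred0) n i : (i <= n)%N ->
  (n`!%:R : K)^-1 *+ 'C(n, i) = (i`!%:R)^-1 * ((n - i)`!%:R)^-1.
Proof.
move=> le_in; have nz m : (m`!%:R : K) != 0.
  by have /pcharf0P -> := hK; rewrite -lt0n fact_gt0.
have bin_nz : ('C(n, i)%:R : K) != 0.
  by have /pcharf0P -> := hK; rewrite -lt0n bin_gt0.
rewrite -mulr_natr -(bin_fact le_in) !natrM.
by field; rewrite !nz bin_nz.
Qed.

Section Unitriangular.
Variables (K : fieldType) (B : comAlgType K) (E : series B -> series B).

Definition slinear : Prop :=
  forall c f g, E (sadd (sscal c f) g) = sadd (sscal c (E f)) (E g).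

Definition unitriangular : Prop :=
  forall v d, vanishes_below v d -> vanishes_below v (E d) /\ E d v = d v.

Hypotheses (E_lin : slinear) (E_tri : unitriangular).

Lemma slinearD f g : E (sadd f g) = sadd (E f) (E g).
Proof. by rewrite -{1}(sscal1 f) E_lin sscal1. Qed.

Lemma slinearB f g : E (sadd (sopp f) g) = sadd (sopp (E f)) (E g).
Proof. by rewrite -sscalN1 E_lin sscalN1. Qed.

Lemma slinear0 : E (szero B) = szero B.
Proof. by have := slinearB (szero B) (szero B); rewrite !saddNl. Qed.

Lemma slinearN f : E (sopp f) = sopp (E f).
Proof. by rewrite -[sopp f]sadd0r slinearB slinear0 sadd0r. Qed.

Lemma unitriangular_loc m f g :
  (forall j, (j <= m)%N -> f j = g j) -> E f m = E g m.
Proof.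
move=> fg; have d0 : vanishes_below m.+1 (sadd (sopp f) g).
  by move=> j lt_jm; rewrite /sadd /sopp fg // addNr.
have := (E_tri d0).1 m (ltnSn m).
by rewrite slinearB /sadd /sopp => /eqP; rewrite addrC subr_eq0 => /eqP.
Qed.

Lemma unitriangular_inj : injective E.
Proof.
move=> f g Efg; pose d := sadd (sopp f) g.
have Ed0 : E d = szero B by rewrite slinearB Efg saddNl.
have d0 m : vanishes_below m d.
  elim: m => [|m IH] j //; rewrite ltnS leq_eqVlt => /predU1P[-> | ?].
    by rewrite -(E_tri IH).2 Ed0.
  exact: IH.
apply: functional_extensionality => j; have /eqP := d0 j.+1 j (ltnSn j).
by rewrite /d /sadd /sopp addrC subr_eq0 => /eqP.
Qed.

(* By unitriangularity, a correction at order m' changes E only from order m'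
   on, and at order m' by exactly the correction. *)
Fixpoint triang_inv_below (h : series B) (m : nat) : series B :=
  if m is m'.+1 then
    let g := triang_inv_below h m' in
    fun j => if j == m' then h m' - E g m' else g j
  else szero B.

Definition triang_inv (h : series B) : series B :=
  fun m => triang_inv_below h m.+1 m.

Lemma triang_inv_below_ge h m j : (m <= j)%N -> triang_inv_below h m j = 0.
Proof.
elim: m => [//|m IH] le_mj /=.
by rewrite ifF ?IH 1?ltnW //; apply/negbTE; rewrite neq_ltn le_mj orbT.
Qed.

Lemma triang_inv_belowE h m j : (j < m)%N ->
  triang_inv_below h m j = triang_inv h j.
Proof.
elim: m => [//|m IH]; rewrite ltnS leq_eqVlt => /predU1P[-> // | lt_jm] /=.
by rewrite ifF ?IH //; apply/negbTE; rewrite neq_ltn lt_jm.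
Qed.

Lemma triang_inv_belowK h m j : (j < m)%N -> E (triang_inv_below h m) j = h j.
Proof.
elim: m j => [//|m IH] j; set g := triang_inv_below h m.
pose d : series B := fun j => if j == m then h m - E g m else 0.
have -> : triang_inv_below h m.+1 = sadd g d.
  apply: functional_extensionality => i; rewrite /= /sadd /d /g.
  case: (i =P m) => [->|_]; last by rewrite addr0.
  by rewrite triang_inv_below_ge // add0r.
have d0 : vanishes_below m d by move=> i lt_im; rewrite /d ifF // ltn_eqF.
rewrite slinearD /sadd ltnS leq_eqVlt => /predU1P[-> | lt_jm].
  by rewrite (E_tri d0).2 /d eqxx addrC subrK.
by rewrite (E_tri d0).1 // addr0 IH.
Qed.

Lemma triang_invK h : E (triang_inv h) = h.
Proof.
apply: functional_extensionality => m.
rewrite -(triang_inv_belowK h (ltnSn m)); apply: unitriangular_loc => j le_jm.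
by rewrite triang_inv_belowE.
Qed.

End Unitriangular.

Section SeriesExponential.
Variables (K : fieldType) (B : comAlgType K) (X : nat -> B -> B).
Hypotheses (hX0 : forall b, X 0%N b = 0) (hXder : forall k, is_derivation (X k)).
Implicit Types (f g : series B) (p q : {poly B}).

Let X_0 k : X k 0 = 0 := derivation0 (hXder k).
Let X_1 k : X k 1 = 0 := derivation1 (hXder k).

Lemma iter_sder_vanishes n v f : vanishes_below v f ->
  vanishes_below (n + v) (iter n (sder X) f).
Proof.
move=> f0; elim: n => [//|n IH] j lt_j /=.
rewrite /sder big1 // => -[[|k] lt_k] _ /=; first by rewrite hX0.
by rewrite IH ?X_0 //; move: lt_j; rewrite addSn; lia.
Qed.

Lemma sexp_unitriangular : unitriangular (sexp X).
Proof.
move=> v d d0; split=> [j lt_jv|].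
  rewrite /sexp big1 // => n _.
  by rewrite (@iter_sder_vanishes n v d) ?scaler0 // (leq_trans lt_jv) ?leq_addl.
rewrite /sexp big_ord_recl big1 ?addr0 => [|n _].
  by rewrite fact0 invr1 scale1r.
by rewrite (@iter_sder_vanishes _ v d) ?scaler0 // lift0 addSn ltnS leq_addl.
Qed.

Lemma sexp_one : sexp X (sone B) = sone B.
Proof.
have sder_one : sder X (sone B) = szero B.
  apply: functional_extensionality => j; rewrite /sder big1 // => k _.
  by rewrite /sone /sconst; case: (j - k)%N; rewrite ?X_0 ?X_1.
have iter_one n : iter n.+1 (sder X) (sone B) = szero B.
  elim: n => [//|n IH]; rewrite iterS IH.
  apply: functional_extensionality => j.
  by rewrite /sder big1 // => k _; rewrite X_0.
apply: functional_extensionality => m.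
rewrite /sexp big_ord_recl big1 ?addr0 => [|n _].
  by rewrite fact0 invr1 scale1r.
by rewrite lift0 iter_one scaler0.
Qed.

(* Series carry no ring structure here, so products are computed in B[lambda]:
   below order N, the polynomial derivation [truncder N] acts as X' does. *)
Definition truncder N p : {poly B} := \sum_(k < N) 'X^k * map_poly (X k) p.

Definition truncexp N p : {poly B} :=
  \sum_(n < N) ((n`!%:R)^-1 : K)%:A *: iter n (truncder N) p.

Lemma coef_map_der k p i : (map_poly (X k) p)`_i = X k p`_i.
Proof. exact: coef_map_id0 (X_0 k). Qed.

Lemma map_poly_derD k p q :
  map_poly (X k) (p + q) = map_poly (X k) p + map_poly (X k) q.
Proof.
by apply/polyP => i; rewrite coefD !coef_map_der coefD (derivationD (hXder k)).
Qed.

Lemma map_poly_derM k p q :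
  map_poly (X k) (p * q) = map_poly (X k) p * q + p * map_poly (X k) q.
Proof.
apply/polyP => i; rewrite coefD !coefM coef_map_der coefM.
rewrite (derivation_sum (hXder k)) -big_split; apply: eq_bigr => j _.
by rewrite (derivationM (hXder k)) !coef_map_der.
Qed.

Lemma truncderD N p q : truncder N (p + q) = truncder N p + truncder N q.
Proof.
rewrite /truncder -big_split; apply: eq_bigr => k _.
by rewrite map_poly_derD mulrDr.
Qed.

Lemma truncderM N p q : truncder N (p * q) = truncder N p * q + p * truncder N q.
Proof.
rewrite /truncder mulr_suml mulr_sumr -big_split; apply: eq_bigr => k _.
by rewrite map_poly_derM mulrDr mulrA [_ * (p * _)]mulrCA.
Qed.

Lemma truncder_alg N M (c : nat -> K) : truncder N (\poly_(i < M) (c i)%:A) = 0.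
Proof.
rewrite /truncder big1 // => k _.
suff -> : map_poly (X k) (\poly_(i < M) (c i)%:A) = 0 by rewrite mulr0.
apply/polyP => i; rewrite coef_map_der coef_poly coef0.
by case: ifP => _; rewrite ?(derivation_alg (hXder k)) ?X_0.
Qed.

Lemma coef_truncder N p m : (m < N)%N ->
  (truncder N p)`_m = \sum_(k < m.+1) X k p`_(m - k).
Proof.
move=> lt_mN; rewrite /truncder coef_sum.
rewrite (big_ord_widen N (fun k => X k p`_(m - k))) // [RHS]big_mkcond /=.
apply: eq_bigr => k _; rewrite coefXnM coef_map_der ltnS.
by case: ltnP.
Qed.

Lemma coef_iter_truncder N f p : (forall j, (j < N)%N -> f j = p`_j) ->
  forall n m, (m < N)%N -> iter n (sder X) f m = (iter n (truncder N) p)`_m.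
Proof.
move=> fp; elim=> [|n IH] m lt_mN /=; first exact: fp.
rewrite coef_truncder //; apply: eq_bigr => k _; rewrite IH //.
exact: leq_ltn_trans (leq_subr _ _) lt_mN.
Qed.

Lemma coef_iter_truncder_small N p n j : (j < N)%N -> (j < n)%N ->
  (iter n (truncder N) p)`_j = 0.
Proof.
move=> lt_jN lt_jn.
rewrite -(@coef_iter_truncder N (fun i => p`_i) p (fun _ _ => erefl) n j lt_jN).
by rewrite (@iter_sder_vanishes n 0) // addn0.
Qed.

Lemma sexp_truncexp N f p m : (forall j, (j < N)%N -> f j = p`_j) -> (m < N)%N ->
  sexp X f m = (truncexp N p)`_m.
Proof.
move=> fp lt_mN; rewrite /sexp /truncexp coef_sum.
under [RHS]eq_bigr do rewrite coefZ mulr_algl -(coef_iter_truncder fp _ lt_mN).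
rewrite (big_ord_widen N (fun n => (n`!%:R)^-1 *: iter n (sder X) f m)) //.
rewrite big_mkcond /=; apply: eq_bigr => n _; case: ltnP => // lt_mn.
by rewrite (@iter_sder_vanishes n 0 f) ?scaler0 ?addn0.
Qed.

Lemma truncexp_lin N (c : nat -> K) p q :
  truncexp N (\poly_(i < N) (c i)%:A * p + q) =
  \poly_(i < N) (c i)%:A * truncexp N p + truncexp N q.
Proof.
have iter_alg n : iter n (truncder N) (\poly_(i < N) (c i)%:A * p) =
    \poly_(i < N) (c i)%:A * iter n (truncder N) p.
  by elim: n => //= n ->; rewrite truncderM truncder_alg mul0r add0r.
rewrite /truncexp mulr_sumr -big_split; apply: eq_bigr => n _.
by rewrite (iter_derivation_add (truncderD N)) iter_alg scalerDr scalerAr.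
Qed.

Definition trunc N f : {poly B} := \poly_(i < N) f i.

Lemma coef_trunc N f j : (j < N)%N -> (trunc N f)`_j = f j.
Proof. by move=> lt_jN; rewrite coef_poly lt_jN. Qed.

Lemma sexp_slinear : slinear (sexp X).
Proof.
move=> c f g; apply: functional_extensionality => m.
pose cp := \poly_(i < m.+1) (c i)%:A : {poly B}.
have trE h j : (j < m.+1)%N -> h j = (trunc m.+1 h)`_j.
  by move=> ?; rewrite coef_trunc.
rewrite (@sexp_truncexp m.+1 _ (cp * trunc m.+1 f + trunc m.+1 g)) //; last first.
  move=> j lt_jm; rewrite coefD coefM /sadd /sscal coef_trunc //; congr (_ + _).
  apply: eq_bigr => -[i lt_ij] _ /=.
  rewrite coef_poly coef_trunc ?(leq_trans lt_ij lt_jm) ?mulr_algl //.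
  exact: leq_ltn_trans (leq_subr _ _) lt_jm.
rewrite truncexp_lin coefD coefM /sadd /sscal -(sexp_truncexp (trE g)) //.
congr (_ + _); apply: eq_bigr => -[i lt_im] _ /=.
by rewrite coef_poly lt_im mulr_algl -(sexp_truncexp (trE f)) // ltnS leq_subr.
Qed.

Hypothesis hK : [pchar K] =i pred0.

Lemma truncexp_mul_coef N p q m : (m < N)%N ->
  (truncexp N (p * q))`_m = (truncexp N p * truncexp N q)`_m.
Proof.
move=> lt_mN; set D := truncder N; pose w n : K := (n`!%:R)^-1.
pose G k l := (w k * w l) *: (iter k D p * iter l D q)`_m.
have G0 k l : (N <= k + l)%N -> G k l = 0.
  move=> le_N; rewrite /G coefM big1 ?scaler0 // => -[i lt_im] _ /=.
  case: (ltnP i k) => [lt_ik | le_ki].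
    by rewrite coef_iter_truncder_small ?mul0r // (leq_ltn_trans _ lt_mN).
  rewrite (@coef_iter_truncder_small N q l) ?mulr0 //.
    exact: leq_ltn_trans (leq_subr _ _) lt_mN.
  by move: le_N le_ki lt_im lt_mN; lia.
transitivity (\sum_(n < N) \sum_(i < n.+1) G i (n - i)%N); last first.
  rewrite sum_triangle_square // /truncexp mulr_suml coef_sum.
  apply: eq_bigr => k _; rewrite mulr_sumr coef_sum; apply: eq_bigr => l _.
  by rewrite -scalerAl -scalerAr !coefZ !mulr_algl scalerA.
rewrite /truncexp coef_sum; apply: eq_bigr => n _.
rewrite coefZ (iter_derivation_mul (truncderD N) (truncderM N)).
rewrite coef_sum mulr_sumr.
apply: eq_bigr => i _; have le_in : (i <= n)%N by rewrite -ltnS.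
by rewrite coefMn mulrnAr -mulrnAl scalerMnl invfact_bin // mulr_algl.
Qed.

Lemma sexp_mul f g : sexp X (smul f g) = smul (sexp X f) (sexp X g).
Proof.
apply: functional_extensionality => m.
have trE h j : (j < m.+1)%N -> h j = (trunc m.+1 h)`_j.
  by move=> ?; rewrite coef_trunc.
rewrite (@sexp_truncexp m.+1 _ (trunc m.+1 f * trunc m.+1 g)) //; last first.
  move=> j lt_jm; rewrite coefM /smul; apply: eq_bigr => -[i lt_ij] _ /=.
  rewrite !coef_trunc ?(leq_trans lt_ij lt_jm) //.
  exact: leq_ltn_trans (leq_subr _ _) lt_jm.
rewrite truncexp_mul_coef // coefM /smul; apply: eq_bigr => -[i lt_im] _ /=.
by rewrite -(sexp_truncexp (trE f)) -?(sexp_truncexp (trE g)) // ltnS leq_subr.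
Qed.

End SeriesExponential.

Section SeriesBracket.
Variables (K : fieldType) (B : comAlgType K).
Variable br : series B -> series B -> series B.
Hypothesis hbr : spoisson (fun _ => True) br.
Implicit Types f g : series B.

Lemma spoisson_sub (Q : series B -> Prop) :
  (forall f g, Q f -> Q g -> Q (br f g)) -> spoisson Q br.
Proof.
case: hbr => _ lin anti jac leib Q_br.
by split=> *; [apply: Q_br | apply: lin | apply: anti | apply: jac | apply: leib].
Qed.

Lemma sbr0l g : br (szero B) g = szero B.
Proof.
case: hbr => _ lin _ _ _.
have := lin (kconst (-1)) (szero B) (szero B) g I I I.
by rewrite !sscalN1 sopp0 sadd0r saddNl.
Qed.

Lemma sbr0r f : br f (szero B) = szero B.
Proof. by case: hbr => _ _ anti _ _; rewrite anti // sbr0l sopp0. Qed.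

Definition slambda : series K := fun i => if i == 1%N then 1 else 0.

Lemma sscal_slambda0 f : sscal slambda f 0 = 0.
Proof. by rewrite /sscal big_ord1 scale0r. Qed.

Lemma sscal_slambdaS f j : sscal slambda f j.+1 = f j.
Proof.
rewrite /sscal big_ord_recl big_ord_recl /= scale0r scale1r add0r subn1.
by rewrite big1 ?addr0 // => i _; rewrite scale0r.
Qed.

Lemma slambda_decomp f :
  f = sadd (sscal slambda (fun j => f j.+1)) (sconst (f 0%N)).
Proof.
apply: functional_extensionality => -[|j]; rewrite /sadd.
  by rewrite sscal_slambda0 add0r.
by rewrite sscal_slambdaS addr0.
Qed.

Lemma sbr_coef0l f g : br f g 0 = br (sconst (f 0%N)) g 0.
Proof.
case: hbr => _ lin _ _ _.
by rewrite {1}(slambda_decomp f) lin // /sadd sscal_slambda0 add0r.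
Qed.

Lemma sbr_coef0 f g : br f g 0 = br (sconst (f 0%N)) (sconst (g 0%N)) 0.
Proof.
case: hbr => _ _ anti _ _.
rewrite sbr_coef0l anti // /sopp (sbr_coef0l g).
by rewrite (anti (sconst _)) // /sopp opprK.
Qed.

(* K[[lambda]]-bilinearity lets a factor lambda^n pass through the bracket. *)
Lemma sbr_coef_lead n f g : vanishes_below n f ->
  br f g n = br (sconst (f n)) (sconst (g 0%N)) 0.
Proof.
elim: n f => [|n IH] f f0; first exact: sbr_coef0.
case: hbr => _ lin _ _ _.
rewrite {1}(slambda_decomp f) f0 // sconst0 lin // sbr0l /sadd addr0.
rewrite sscal_slambdaS IH //.
by move=> j lt_jn; apply: f0.
Qed.

End SeriesBracket.

Section Commutants.
Variables (K : fieldType) (A B : comAlgType K).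
Variables (sigma0 : B -> B -> B) (phi0 : A -> B).
Hypothesis hsigma0 : poisson sigma0.

Lemma commutant_lin (c : K) x y : commutant sigma0 phi0 x ->
  commutant sigma0 phi0 y -> commutant sigma0 phi0 (c *: x + y).
Proof.
by case: hsigma0 => lin _ _ _ cx cy a; rewrite lin cx cy scaler0 addr0.
Qed.

Lemma commutant0 : commutant sigma0 phi0 0.
Proof.
case: hsigma0 => lin _ _ _ a.
by have := lin (-1) 1 1 (phi0 a); rewrite !scaleN1r !addNr.
Qed.

Lemma commutant_sum (I : Type) (r : seq I) (P : pred I) (F : I -> B) :
  (forall i, P i -> commutant sigma0 phi0 (F i)) ->
  commutant sigma0 phi0 (\sum_(i <- r | P i) F i).
Proof.
move=> cF; apply: big_ind => //; first exact: commutant0.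
by move=> x y cx cy; rewrite -[x]scale1r; apply: commutant_lin.
Qed.

Lemma commutantM x y : commutant sigma0 phi0 x ->
  commutant sigma0 phi0 y -> commutant sigma0 phi0 (x * y).
Proof.
case: hsigma0 => _ anti _ leib cx cy a.
by rewrite anti leib (anti _ x) (anti _ y) cx cy !oppr0 mul0r mulr0 addr0 oppr0.
Qed.

Lemma commutant_series_lin c f g : commutant_series sigma0 phi0 f ->
  commutant_series sigma0 phi0 g ->
  commutant_series sigma0 phi0 (sadd (sscal c f) g).
Proof.
move=> cf cg n; rewrite /sadd /sscal -[X in X + _]scale1r.
apply: commutant_lin => //; apply: commutant_sum => i _.
by rewrite -[_ *: _]addr0; apply: commutant_lin => //; exact: commutant0.
Qed.

Lemma commutant_series_mul f g : commutant_series sigma0 phi0 f ->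
  commutant_series sigma0 phi0 g -> commutant_series sigma0 phi0 (smul f g).
Proof. by move=> cf cg n; apply: commutant_sum => i _; apply: commutantM. Qed.

End Commutants.

Section DeformedCommutant.
Variables (K : fieldType) (A B : comAlgType K).
Variables (sigma0 : B -> B -> B) (phi0 : A -> B).
Variables (sigma : series B -> series B -> series B) (Phi : series A -> series B).
Hypotheses (hsigma0 : poisson sigma0) (hsigma : spoisson (fun _ => True) sigma).
Hypothesis hsigma_0 : forall a b, sigma (sconst a) (sconst b) 0%N = sigma0 a b.
Hypothesis hPhi_0 : forall a, Phi (sconst a) 0%N = phi0 a.
Local Notation C := (deformed_commutant sigma Phi).
Local Notation A' := (commutant_series sigma0 phi0).

Lemma deformed_commutant_lin c x y : C x -> C y -> C (sadd (sscal c x) y).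
Proof.
have [_ lin _ _ _] := hsigma; move=> Cx Cy g.
by rewrite lin // Cx Cy sscal0r sadd0r.
Qed.

Lemma deformed_commutant_br x y : C x -> C y -> C (sigma x y).
Proof.
have [_ _ anti jac _] := hsigma; move=> Cx Cy g.
have := jac x y (Phi g) I I I.
rewrite Cy (anti (Phi g) x) // Cx sopp0 !(sbr0r hsigma) !sadd0l => J.
by rewrite anti // J sopp0.
Qed.

Lemma deformed_commutant_lead n h : C h -> vanishes_below n h ->
  commutant sigma0 phi0 (h n).
Proof.
move=> Ch h0 a; have := congr1 (fun s => s n) (Ch (sconst a)).
by rewrite /= sbr_coef_lead // hsigma_0 hPhi_0.
Qed.

Variable E : series B -> series B.
Hypotheses (E_lin : slinear E) (E_tri : unitriangular E).
Hypothesis E_A' : forall f, A' f -> C (E f).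

Lemma commutant_series_of_deformed f : C (E f) -> A' f.
Proof.
move=> CEf; suff A'f n : forall j, (j < n)%N -> commutant sigma0 phi0 (f j).
  by move=> j; apply: (A'f j.+1).
elim: n => [//|n IH] j; rewrite ltnS leq_eqVlt => /predU1P[-> | ]; last exact: IH.
pose g : series B := fun j => if (j < n)%N then f j else 0.
have A'g : A' g.
  by move=> i; rewrite /g; case: ifP => [/IH //|_]; exact: commutant0.
pose d := sadd (sopp g) f.
have d0 : vanishes_below n d.
  by move=> i lt_in; rewrite /d /sadd /sopp /g lt_in addNr.
have CEd : C (E d).
  rewrite slinearB // -sscalN1.
  by apply: deformed_commutant_lin => //; exact: E_A'.
have [Ed0 Edn] := E_tri d0.
have -> : f n = E d n by rewrite Edn /d /sadd /sopp /g ltnn oppr0 add0r.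
exact: deformed_commutant_lead.
Qed.

End DeformedCommutant.

Section Transport.
Variables (K : fieldType) (B : comAlgType K).
Variables (P Q : series B -> Prop) (E Einv : series B -> series B).
Variable br : series B -> series B -> series B.
Hypotheses (hbr : spoisson Q br) (E_lin : slinear E) (E_inj : injective E).
Hypothesis E_mul : forall f g, E (smul f g) = smul (E f) (E g).
Hypothesis E_PQ : forall f, P f -> Q (E f).
Hypothesis Einv_QP : forall h, Q h -> P (Einv h).
Hypothesis EinvK : forall h, Q h -> E (Einv h) = h.
Hypothesis P_lin : forall c f g, P f -> P g -> P (sadd (sscal c f) g).
Hypothesis P_mul : forall f g, P f -> P g -> P (smul f g).

Definition transport_br f g := Einv (br (E f) (E g)).

Lemma transport_brP f g : P f -> P g ->
  P (transport_br f g) /\ E (transport_br f g) = br (E f) (E g).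
Proof.
have [br_Q _ _ _ _] := hbr; move=> Pf Pg.
by split; [apply: Einv_QP | apply: EinvK]; apply: br_Q; apply: E_PQ.
Qed.

Lemma spoisson_transport : spoisson P transport_br.
Proof.
have [_ lin anti jac leib] := hbr.
have trP f g : P f -> P g -> P (transport_br f g).
  by move=> Pf Pg; have [] := transport_brP Pf Pg.
have trE f g : P f -> P g -> E (transport_br f g) = br (E f) (E g).
  by move=> Pf Pg; have [] := transport_brP Pf Pg.
split=> [f g | c f g h Pf Pg Ph | f g Pf Pg | f g h Pf Pg Ph | f g h Pf Pg Ph].
- exact: trP.
- have [QEf QEg QEh] := And3 (E_PQ Pf) (E_PQ Pg) (E_PQ Ph).
  have Pfg := P_lin c Pf Pg.
  apply: E_inj; rewrite trE // E_lin lin //.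
  by rewrite E_lin !trE.
- have [QEf QEg] := conj (E_PQ Pf) (E_PQ Pg).
  by apply: E_inj; rewrite (slinearN E_lin) !trE // anti.
- have [QEf QEg QEh] := And3 (E_PQ Pf) (E_PQ Pg) (E_PQ Ph).
  have [Pgh Phf Pfg] := And3 (trP g h Pg Ph) (trP h f Ph Pf) (trP f g Pf Pg).
  apply: E_inj; rewrite !(slinearD E_lin) !trE // jac //.
  by rewrite (slinear0 E_lin).
- have [QEf QEg QEh] := And3 (E_PQ Pf) (E_PQ Pg) (E_PQ Ph).
  have Pgh := P_mul Pg Ph.
  apply: E_inj; rewrite trE // E_mul leib //.
  by rewrite (slinearD E_lin) !E_mul !trE.
Qed.

End Transport.

Theorem proposition3p9
  (K : fieldType) (hK : [pchar K] =i pred0)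
  (A B : comAlgType K)
  (pi0 : A -> A -> A) (sigma0 : B -> B -> B)
  (hpi0 : poisson pi0) (hsigma0 : poisson sigma0)
  (phi0 : {lrmorphism A -> B})
  (hphi0 : forall x y, phi0 (pi0 x y) = sigma0 (phi0 x) (phi0 y))
  (pi : series A -> series A -> series A)
  (sigma : series B -> series B -> series B)
  (hpi : spoisson (fun _ => True) pi)
  (hpi_0 : forall a b, pi (sconst a) (sconst b) 0%N = pi0 a b)
  (hsigma : spoisson (fun _ => True) sigma)
  (hsigma_0 : forall a b, sigma (sconst a) (sconst b) 0%N = sigma0 a b)
  (Phi : series A -> series B)
  (hPhi_lin : forall (c : series K) f g,
      Phi (sadd (sscal c f) g) = sadd (sscal c (Phi f)) (Phi g))
  (hPhi_mul : forall f g, Phi (smul f g) = smul (Phi f) (Phi g))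
  (hPhi_one : Phi (sone A) = sone B)
  (hPhi_br : forall f g, Phi (pi f g) = sigma (Phi f) (Phi g))
  (hPhi_0 : forall a, Phi (sconst a) 0%N = phi0 a)
  (X : nat -> B -> B)
  (hX0 : forall b, X 0%N b = 0)
  (hXder : forall k, is_derivation (X k))
  (hexp : forall f : series B, commutant_series sigma0 phi0 f ->
      deformed_commutant sigma Phi (sexp X f)) :
  let A'ser := commutant_series sigma0 phi0 in
  let C := deformed_commutant sigma Phi in
  let Phi' := sexp X in
  (* (i) Phi' : A'[[lambda]] -> C is a ring isomorphism *)
  ((forall f g, A'ser f -> A'ser g -> Phi' (sadd f g) = sadd (Phi' f) (Phi' g)) /\
   (forall f g, A'ser f -> A'ser g -> Phi' (smul f g) = smul (Phi' f) (Phi' g)) /\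
   Phi' (sone B) = sone B /\
   (forall f g, A'ser f -> A'ser g -> Phi' f = Phi' g -> f = g) /\
   (forall h, C h -> exists2 f, A'ser f & Phi' f = h))
  /\
  (* (ii) unique Poisson structure pi' on A'[[lambda]] making Phi' a Poisson morphism *)
  (exists pi' : series B -> series B -> series B,
     (spoisson A'ser pi' /\
      (forall (c : series K) f g, A'ser f -> A'ser g ->
          Phi' (sadd (sscal c f) g) = sadd (sscal c (Phi' f)) (Phi' g)) /\
      (forall f g, A'ser f -> A'ser g -> Phi' (pi' f g) = sigma (Phi' f) (Phi' g))) /\
     (forall pi'' : series B -> series B -> series B,
        spoisson A'ser pi'' ->
        (forall f g, A'ser f -> A'ser g -> Phi' (pi'' f g) = sigma (Phi' f) (Phi' g)) ->
        forall f g, A'ser f -> A'ser g -> pi'' f g = pi' f g)).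
Proof.
move=> A'ser C Phi'.
have E_lin := sexp_slinear hX0 hXder.
have E_tri := sexp_unitriangular hX0 hXder.
have E_inj := unitriangular_inj E_lin E_tri.
have E_mul := sexp_mul hX0 hXder hK.
have EK h : C h -> Phi' (triang_inv Phi' h) = h by move=> _; exact: triang_invK.
have C_A' h : C h -> A'ser (triang_inv Phi' h).
  move=> Ch; apply: (commutant_series_of_deformed hsigma0 hsigma hsigma_0 hPhi_0
    E_lin E_tri hexp).
  by rewrite triang_invK.
have sigmaC : spoisson C sigma.
  by apply: spoisson_sub => //; exact: deformed_commutant_br.
split.
  split; first by move=> f g _ _; exact: slinearD.
  split; first by move=> f g _ _; exact: E_mul.
  split; first exact: sexp_one.
  split; first by move=> f g _ _; exact: E_inj.
  by move=> h Ch; exists (triang_inv Phi' h); [exact: C_A' | exact: triang_invK].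
have br_spec := transport_brP sigmaC hexp C_A' EK.
exists (transport_br Phi' (triang_inv Phi') sigma); split.
  split.
    exact: spoisson_transport EK (commutant_series_lin hsigma0)
      (commutant_series_mul hsigma0).
  split=> [c f g _ _ | f g A'f A'g]; first exact: E_lin.
  by have [] := br_spec f g A'f A'g.
move=> pi'' _ Epi'' f g A'f A'g; apply: E_inj.
by rewrite [LHS](Epi'' f g A'f A'g); have [_ ->] := br_spec f g A'f A'g.
Qed.
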